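(* Let $f:\mathbb{R}\to\mathbb{R}$ be Abel continuous, and let $(p_n)$ be a sequence of real numbers which is slowly oscillating and Abel convergent. Then $(f(p_n))$ is a convergent sequence.
   Context: A sequence $(p_n)$ of real numbers is Abel convergent to $\ell$ if $\sum_{k=0}^{\infty}p_k x^k$ converges for every $0\le x<1$ and $\lim_{x\to 1^-}(1-x)\sum_{k=0}^{\infty}p_k x^k=\ell$. $f$ is Abel continuous if for every sequence $(p_n)$ Abel convergent to some $\ell$, $(f(p_n))$ is Abel convergent to $f(\ell)$. A sequence $(p_n)$ is slowly oscillating if for every $\varepsilon>0$ there exist $\delta>0$ and a positive integer $N$ such that $|p_m-p_n|<\varepsilon$ whenever $n\ge N$ and $n\le m\le(1+\delta)n$. *)

From Stdlib Require Import Reals.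
From Coquelicot Require Import Coquelicot.
Open Scope R_scope.

Definition abel_convergent (p : nat -> R) (l : R) : Prop :=
  (forall x : R, 0 <= x < 1 -> ex_series (fun k => p k * x ^ k)) /\
  filterlim (fun x => (1 - x) * Series (fun k => p k * x ^ k))
            (at_left 1) (locally l).

Definition abel_continuous (f : R -> R) : Prop :=
  forall (p : nat -> R) (l : R),
    abel_convergent p l -> abel_convergent (fun n => f (p n)) (f l).

Definition slowly_oscillating (p : nat -> R) : Prop :=
  forall eps : R, 0 < eps ->
    exists delta : R, 0 < delta /\
    exists N : nat, (0 < N)%nat /\
      forall n m : nat, (N <= n)%nat -> (n <= m)%nat ->
        INR m <= (1 + delta) * INR n -> Rabs (p m - p n) < eps.

(* Two facts combine: a slowly oscillating, Abel convergent sequence converges (a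
   Tauberian theorem), and an Abel continuous function is sequentially continuous.

   Let x = 2^(-1/n) and weight p_k by K_n(k) = (4 x^k (1 - x^k))^r.
   The weight is a polynomial in x^k, so sum_k K_n(k) (p_k - l) is a finite combination
   of Abel means at the points x^j; it is therefore o(1/(1 - x)) = o(n). The weight is at
   least 3/4 for n <= k <= (1 + 1/(2 sqrt r)) n, so its total mass is at least of order
   n / sqrt r, while off the window n/(1 + del) <= k <= (1 + del) n it carries an extra
   factor (1 - c(del)^2)^(r-1). Slow oscillation keeps |p_k - p_n| < eps on the window
   and lets it grow at most linearly in k/n or n/k away from it. For r large the
   off-window contribution is a small fraction of the mass, and comparing
   (p_n - l) * mass with the weighted sums gives |p_n - l| <= 3 eps for large n.

   If q_n -> l while f (q_n) stays on one side of f l at distance eps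
   along a subsequence, that subsequence is still convergent, hence Abel convergent to l
   (Abelian theorem), so f of it is Abel convergent to f l; but Abel limits preserve
   inequalities. *)

From Stdlib Require Import Reals Lra Lia.
From Stdlib Require Import Classical ClassicalEpsilon.
From Coquelicot Require Import Coquelicot.
Open Scope R_scope.

Lemma ln2_bounds : / 2 < ln 2 < 1.
Proof.
  split; [exact ln_lt_2|].
  rewrite <- ln_exp with 1. apply ln_increasing; [lra|].
  pose proof (exp_ineq1 1 ltac:(lra)). lra.
Qed.

Lemma one_minus_exp_opp_le (b : R) : 1 - exp (- b) <= b.
Proof. pose proof (exp_ineq1_le (- b)). lra. Qed.

Lemma one_minus_exp_opp_ge (b : R) : 0 <= b -> b / (1 + b) <= 1 - exp (- b).
Proof.
  intro Hb. rewrite exp_Ropp.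
  assert (1 + b <= exp b) by apply exp_ineq1_le.
  assert (/ exp b <= / (1 + b)) by (apply Rinv_le_contravar; lra).
  replace (b / (1 + b)) with (1 - / (1 + b)) by (field; lra). lra.
Qed.

Lemma exp_le_compat (x y : R) : x <= y -> exp x <= exp y.
Proof. intros [H|H]; [left; apply exp_increasing, H|right; rewrite H; reflexivity]. Qed.

Lemma exp_pow (a : R) (k : nat) : exp a ^ k = exp (INR k * a).
Proof.
  induction k as [|k IH].
  - simpl. rewrite Rmult_0_l, exp_0. reflexivity.
  - rewrite <- tech_pow_Rmult, IH, <- exp_plus, S_INR. f_equal; ring.
Qed.

Lemma pow_le_1 (x : R) (k : nat) : 0 <= x <= 1 -> x ^ k <= 1.
Proof. intro Hx. rewrite <- (pow1 k). apply pow_incr. exact Hx. Qed.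

Lemma pow_le_base (x : R) (j : nat) : 0 <= x <= 1 -> (1 <= j)%nat -> x ^ j <= x.
Proof.
  intros Hx Hj. destruct j as [|j]; [lia|]. simpl.
  pose proof (pow_le_1 x j Hx). pose proof (pow_le x j (proj1 Hx)). nra.
Qed.

Lemma bernoulli_le_1 (x : R) (j : nat) : 0 <= x <= 1 -> 1 - INR j * (1 - x) <= x ^ j.
Proof.
  intro Hx. induction j as [|j IH]; [simpl; lra|].
  rewrite S_INR. simpl.
  assert (x * (1 - INR j * (1 - x)) <= x * x ^ j) by (apply Rmult_le_compat_l; lra).
  assert (0 <= INR j * (1 - x) * (1 - x)) by (pose proof (pos_INR j); apply Rmult_le_pos; nra).
  nra.
Qed.

Lemma eventually_INR_ge (x : R) : exists m, forall n, (m <= n)%nat -> x <= INR n.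
Proof.
  destruct (nfloor_ex (Rmax 0 x) (Rmax_l 0 x)) as [m Hm]. exists (S m).
  intros n Hn. apply le_INR in Hn. rewrite S_INR in Hn. pose proof (Rmax_r 0 x). lra.
Qed.

Lemma is_lim_seq_epsilon (u : nat -> R) (l : R) :
  is_lim_seq u l <->
  forall eps, 0 < eps -> exists N, forall n, (N <= n)%nat -> Rabs (u n - l) < eps.
Proof.
  rewrite <- is_lim_seq_spec. split.
  - intros H e He. exact (H (mkposreal e He)).
  - intros H [e He]. exact (H e He).
Qed.

Lemma filterlim_at_left_1 (F : R -> R) (l : R) :
  filterlim F (at_left 1) (locally l) <->
  forall eps, 0 < eps -> exists del, 0 < del /\
    forall x, 1 - del < x < 1 -> Rabs (F x - l) < eps.
Proof.
  rewrite filterlim_locally. split.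
  - intros H e He. destruct (H (mkposreal e He)) as [[d Hd] Hx].
    exists d. split; [exact Hd|]. intros x Hx1. apply Hx; [|lra].
    change (Rabs (x - 1) < d). rewrite Rabs_left; lra.
  - intros H [e He]. destruct (H e He) as [d [Hd Hx]].
    exists (mkposreal d Hd). intros y Hy Hlt. apply Hx.
    change (Rabs (y - 1) < d) in Hy. apply Rabs_def2 in Hy. lra.
Qed.

Lemma subseq_choice (P : nat -> Prop) :
  (forall N, exists n, (N <= n)%nat /\ P n) ->
  exists phi : nat -> nat, forall k, (k <= phi k)%nat /\ P (phi k).
Proof.
  intro H. exists (fun k => proj1_sig (constructive_indefinite_description _ (H k))).
  intro k. exact (proj2_sig (constructive_indefinite_description _ (H k))).
Qed.

Lemma is_lim_seq_subseq_ge (u : nat -> R) (l : R) (phi : nat -> nat) :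
  (forall k, (k <= phi k)%nat) -> is_lim_seq u l -> is_lim_seq (fun k => u (phi k)) l.
Proof.
  intro Hphi. apply is_lim_seq_subseq.
  intros P [N HN]. exists N. intros n Hn. apply HN. specialize (Hphi n). lia.
Qed.

Lemma not_is_lim_seq_often (u : nat -> R) (c : R) :
  ~ is_lim_seq u c ->
  exists e, 0 < e /\
    ((forall N, exists n, (N <= n)%nat /\ c + e <= u n) \/
     (forall N, exists n, (N <= n)%nat /\ u n <= c - e)).
Proof.
  rewrite is_lim_seq_epsilon. intro H.
  apply not_all_ex_not in H as [e H]. apply imply_to_and in H as [He H].
  exists e. split; [exact He|].
  destruct (classic (forall N, exists n, (N <= n)%nat /\ c + e <= u n)) as [Hup|Hup];
    [left; exact Hup|right].
  apply not_all_ex_not in Hup as [N0 HN0]. intro N.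
  apply not_ex_all_not with (n := Nat.max N N0) in H.
  apply not_all_ex_not in H as [n Hn]. apply imply_to_and in Hn as [Hn Hlt].
  exists n. split; [lia|].
  assert (~ c + e <= u n) by (intro; apply HN0; exists n; split; [lia|assumption]).
  apply Rnot_lt_le in Hlt. revert Hlt. unfold Rabs. destruct Rcase_abs; lra.
Qed.

Section NonnegSums.
Variable a : nat -> R.
Hypothesis a_nonneg : forall i, 0 <= a i.

Lemma sum_n_nonneg (N : nat) : 0 <= sum_n a N.
Proof.
  induction N as [|N IH]; [rewrite sum_O; apply a_nonneg|].
  rewrite sum_Sn. change (0 <= sum_n a N + a (S N)). pose proof (a_nonneg (S N)). lra.
Qed.

Lemma sum_n_ge_term (N k : nat) : (k <= N)%nat -> a k <= sum_n a N.
Proof.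
  intro Hk. induction N as [|N IH].
  - replace k with 0%nat by lia. rewrite sum_O. lra.
  - rewrite sum_Sn. change (a k <= sum_n a N + a (S N)).
    destruct (Nat.eq_dec k (S N)) as [->|Hne].
    + pose proof (sum_n_nonneg N). lra.
    + pose proof (IH ltac:(lia)). pose proof (a_nonneg (S N)). lra.
Qed.

Lemma sum_n_ge_window (c : R) (n h : nat) :
  (forall k, (n <= k <= n + h)%nat -> c <= a k) -> INR (S h) * c <= sum_n a (n + h).
Proof.
  intro Hc. induction h as [|h IH].
  - rewrite Nat.add_0_r, Rmult_1_l.
    apply Rle_trans with (a n); [apply Hc; lia|apply sum_n_ge_term; lia].
  - replace (n + S h)%nat with (S (n + h)) by lia. rewrite sum_Sn.
    change (INR (S (S h)) * c <= sum_n a (n + h) + a (S (n + h))).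
    rewrite S_INR, Rmult_plus_distr_r, Rmult_1_l.
    assert (c <= a (S (n + h))) by (apply Hc; lia).
    assert (INR (S h) * c <= sum_n a (n + h)) by (apply IH; intros; apply Hc; lia).
    lra.
Qed.

Lemma sum_n_le_Series (N : nat) : ex_series a -> sum_n a N <= Series a.
Proof.
  intro He. apply is_lim_seq_incr_compare; [apply Series_correct, He|].
  intro n. rewrite sum_Sn. change (sum_n a n <= sum_n a n + a (S n)).
  pose proof (a_nonneg (S n)). lra.
Qed.

Lemma Series_nonneg : ex_series a -> 0 <= Series a.
Proof.
  intro He. apply Rle_trans with (sum_n a 0); [apply sum_n_nonneg|].
  apply sum_n_le_Series, He.
Qed.

End NonnegSums.

(** * Abel summation *)

Lemma is_series_geom_nonneg (x : R) : 0 <= x < 1 -> is_series (fun k => x ^ k) (/ (1 - x)).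
Proof. intro. apply is_series_geom. rewrite Rabs_right; lra. Qed.

Lemma ex_series_bounded_geom (q : nat -> R) (B x : R) :
  (forall k, Rabs (q k) <= B) -> 0 <= x < 1 -> ex_series (fun k => q k * x ^ k).
Proof.
  intros HB Hx. apply (ex_series_le (fun k => q k * x ^ k) (fun k => B * x ^ k)).
  - intro k. change (Rabs (q k * x ^ k) <= B * x ^ k).
    rewrite Rabs_mult, (Rabs_right (x ^ k)) by (apply Rle_ge, pow_le; lra).
    apply Rmult_le_compat_r; [apply pow_le; lra|apply HB].
  - exists (B * / (1 - x)). apply (is_series_scal_l B (fun k => x ^ k)), is_series_geom_nonneg, Hx.
Qed.

Lemma is_series_sub_geom (q : nat -> R) (l x : R) :
  0 <= x < 1 -> ex_series (fun k => q k * x ^ k) ->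
  is_series (fun k => (q k - l) * x ^ k) (Series (fun k => q k * x ^ k) - l / (1 - x)).
Proof.
  intros Hx He.
  apply (is_series_ext (fun k => q k * x ^ k + (-1) * (l * x ^ k))).
  { intro k. change (q k * x ^ k + (-1) * (l * x ^ k) = (q k - l) * x ^ k). ring. }
  replace (Series (fun k => q k * x ^ k) - l / (1 - x))
    with (Series (fun k => q k * x ^ k) + (-1) * (l * / (1 - x))) by (unfold Rdiv; ring).
  apply (is_series_plus (fun k => q k * x ^ k) (fun k => (-1) * (l * x ^ k))).
  - apply Series_correct, He.
  - apply (is_series_scal_l (-1) (fun k => l * x ^ k)), (is_series_scal_l l (fun k => x ^ k)).
    apply is_series_geom_nonneg, Hx.
Qed.

Lemma Rabs_Series_le (a b : nat -> R) (lb : R) :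
  (forall k, Rabs (a k) <= b k) -> is_series b lb -> Rabs (Series a) <= lb.
Proof.
  intros Hab Hb. apply Rle_trans with (Series (fun k => Rabs (a k))).
  - apply Series_Rabs. apply (ex_series_le (fun k => Rabs (a k)) b); [|eexists; exact Hb].
    intro k. change (Rabs (Rabs (a k)) <= b k). rewrite Rabs_Rabsolu. apply Hab.
  - rewrite <- (is_series_unique _ _ Hb). apply Series_le; [|eexists; exact Hb].
    intro k. split; [apply Rabs_pos|apply Hab].
Qed.

Lemma is_series_indicator_le (c : R) (K : nat) :
  is_series (fun k => if (k <=? K)%nat then c else 0) (INR (S K) * c).
Proof.
  enough (H : is_lim_seq (sum_n (fun k => if (k <=? K)%nat then c else 0)) (INR (S K) * c))
    by exact H.
  apply (is_lim_seq_ext_loc (fun _ => INR (S K) * c)); [|apply is_lim_seq_const].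
  exists K. intros n Hn. induction Hn.
  - rewrite <- sum_n_const. apply sum_n_ext_loc. intros i Hi.
    apply Nat.leb_le in Hi. rewrite Hi. reflexivity.
  - rewrite sum_Sn, <- IHHn.
    change (INR (S K) * c = INR (S K) * c + (if (S m <=? K)%nat then c else 0)).
    destruct (S m <=? K)%nat eqn:Hf; [apply Nat.leb_le in Hf; lia|]. ring.
Qed.

Lemma Series_geom_split_bound (g : nat -> R) (M e x : R) (K : nat) :
  0 <= x < 1 -> (forall k, Rabs (g k) <= M) -> (forall k, (K <= k)%nat -> Rabs (g k) <= e) ->
  Rabs (Series (fun k => g k * x ^ k)) <= INR (S K) * M + e / (1 - x).
Proof.
  intros Hx HM He.
  assert (HM0 : 0 <= M) by (eapply Rle_trans; [apply Rabs_pos|apply (HM 0%nat)]).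
  assert (He0 : 0 <= e) by (eapply Rle_trans; [apply Rabs_pos|apply (He K); lia]).
  set (b := fun k => (if (k <=? K)%nat then M else 0) + e * x ^ k).
  assert (Hb : is_series b (INR (S K) * M + e * / (1 - x))).
  { apply (is_series_plus (fun k => if (k <=? K)%nat then M else 0) (fun k => e * x ^ k)).
    - apply is_series_indicator_le.
    - apply (is_series_scal_l e (fun k => x ^ k)), is_series_geom_nonneg, Hx. }
  assert (Hgb : forall k, Rabs (g k * x ^ k) <= b k).
  { intro k. unfold b.
    rewrite Rabs_mult, (Rabs_right (x ^ k)) by (apply Rle_ge, pow_le; lra).
    assert (0 <= x ^ k <= 1) by (split; [apply pow_le|apply pow_le_1]; lra).
    destruct (Nat.le_gt_cases K k) as [Hk|Hk].
    - assert (0 <= (if (k <=? K)%nat then M else 0)) by (destruct (k <=? K)%nat; lra).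
      assert (Rabs (g k) * x ^ k <= e * x ^ k) by (apply Rmult_le_compat_r; [lra|apply He, Hk]).
      lra.
    - replace (k <=? K)%nat with true by (symmetry; apply Nat.leb_le; lia).
      assert (Rabs (g k) * x ^ k <= M) by (pose proof (HM k); pose proof (Rabs_pos (g k)); nra).
      assert (0 <= e * x ^ k) by (apply Rmult_le_pos; lra). lra. }
  unfold Rdiv. exact (Rabs_Series_le _ _ _ Hgb Hb).
Qed.

Theorem abelian (q : nat -> R) (l : R) : is_lim_seq q l -> abel_convergent q l.
Proof.
  intro Hq.
  destruct (filterlim_bounded q) as [B HB]; [exists l; exact Hq|].
  assert (Hex : forall x, 0 <= x < 1 -> ex_series (fun k => q k * x ^ k))
    by (intros x Hx; exact (ex_series_bounded_geom q B x HB Hx)).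
  split; [exact Hex|]. apply filterlim_at_left_1. intros e He.
  destruct (proj1 (is_lim_seq_epsilon q l) Hq (e / 2) ltac:(lra)) as [K HK].
  set (M := Rabs l + B).
  assert (HM : forall k, Rabs (q k - l) <= M).
  { intro k. pose proof (Rabs_triang (q k) (- l)). rewrite Rabs_Ropp in H.
    pose proof (HB k) as Hk. change (Rabs (q k) <= B) in Hk. unfold M, Rminus. lra. }
  set (A := INR (S K) * M + 1).
  assert (HA : 0 < A).
  { pose proof (pos_INR (S K)). pose proof (Rabs_pos (q 0%nat - l)). pose proof (HM 0%nat).
    unfold A. nra. }
  exists (Rmin 1 (e / 2 / A)). split; [apply Rmin_pos; [lra|apply Rdiv_lt_0_compat; lra]|].
  intros x Hx. pose proof (Rmin_l 1 (e / 2 / A)). pose proof (Rmin_r 1 (e / 2 / A)).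
  assert (Hx0 : 0 <= x < 1) by lra.
  assert (Hgap : (1 - x) * A < e / 2).
  { assert (1 - x < e / 2 / A) by lra.
    apply (Rmult_lt_compat_r A) in H1; [|lra].
    unfold Rdiv in H1 at 1. rewrite Rmult_assoc, Rinv_l in H1; lra. }
  replace ((1 - x) * Series (fun k => q k * x ^ k) - l)
    with ((1 - x) * (Series (fun k => q k * x ^ k) - l / (1 - x))) by (field; lra).
  rewrite <- (is_series_unique _ _ (is_series_sub_geom q l x Hx0 (Hex x Hx0))).
  assert (Hs := Series_geom_split_bound (fun k => q k - l) M (e / 2) x K Hx0 HM
                  (fun k Hk => Rlt_le _ _ (HK k Hk))).
  rewrite Rabs_mult, Rabs_right by lra.
  apply (Rmult_le_compat_l (1 - x)) in Hs; [|lra].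
  replace ((1 - x) * (INR (S K) * M + e / 2 / (1 - x)))
    with ((1 - x) * (INR (S K) * M) + e / 2) in Hs by (field; lra).
  unfold A in Hgap. lra.
Qed.

Lemma abel_limit_ge (g : nat -> R) (L c : R) :
  abel_convergent g L -> (forall k, c <= g k) -> c <= L.
Proof.
  intros [Hex Hlim] Hc.
  assert (Hle : forall x, 0 <= x < 1 -> c <= (1 - x) * Series (fun k => g k * x ^ k)).
  { intros x Hx. pose proof (is_series_sub_geom g c x Hx (Hex x Hx)) as Hs.
    assert (0 <= Series (fun k => (g k - c) * x ^ k)).
    { apply Series_nonneg; [|eexists; exact Hs].
      intro k. apply Rmult_le_pos; [specialize (Hc k); lra|apply pow_le; lra]. }
    rewrite (is_series_unique _ _ Hs) in H.
    apply (Rmult_le_compat_l (1 - x)) in H; [|lra].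
    replace ((1 - x) * (Series (fun k => g k * x ^ k) - c / (1 - x)))
      with ((1 - x) * Series (fun k => g k * x ^ k) - c) in H by (field; lra).
    lra. }
  change (Rbar_le c L).
  apply (filterlim_le (F := at_left 1) (fun _ => c)
           (fun x => (1 - x) * Series (fun k => g k * x ^ k)) c L);
    [|apply filterlim_const|exact Hlim].
  exists (mkposreal 1 Rlt_0_1). intros y Hy Hy1. apply Hle.
  change (Rabs (y - 1) < 1) in Hy. apply Rabs_def2 in Hy. lra.
Qed.

Lemma abel_convergent_opp (g : nat -> R) (L : R) :
  abel_convergent g L -> abel_convergent (fun k => - g k) (- L).
Proof.
  intros [Hex Hlim]. split.
  - intros x Hx. apply (ex_series_ext (fun k => (-1) * (g k * x ^ k))).
    + intro k. change ((-1) * (g k * x ^ k) = - g k * x ^ k). ring.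
    + apply (ex_series_scal_l (-1) (fun k => g k * x ^ k)), Hex, Hx.
  - apply (filterlim_ext (fun x => - ((1 - x) * Series (fun k => g k * x ^ k)))).
    + intro x. rewrite (Series_ext (fun k => - g k * x ^ k) (fun k => (-1) * (g k * x ^ k)))
        by (intro; ring).
      rewrite Series_scal_l. ring.
    + apply (filterlim_comp _ _ _ _ Ropp _ (locally L)); [exact Hlim|exact (filterlim_opp L)].
Qed.

Lemma abel_limit_le (g : nat -> R) (L c : R) :
  abel_convergent g L -> (forall k, g k <= c) -> L <= c.
Proof.
  intros Hg Hc. apply Ropp_le_cancel.
  apply (abel_limit_ge _ _ _ (abel_convergent_opp g L Hg)). intro k. apply Ropp_le_contravar, Hc.
Qed.

Theorem abel_continuous_is_lim_seq (f : R -> R) (q : nat -> R) (l : R) :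
  abel_continuous f -> is_lim_seq q l -> is_lim_seq (fun n => f (q n)) (f l).
Proof.
  intros Hf Hq. apply NNPP. intro Hn.
  assert (Hsub : forall phi, (forall k, (k <= phi k)%nat) ->
            abel_convergent (fun k => f (q (phi k))) (f l))
    by (intros phi Hphi; apply Hf, abelian, is_lim_seq_subseq_ge; assumption).
  destruct (not_is_lim_seq_often _ _ Hn) as [e [He [Hoften|Hoften]]];
    destruct (subseq_choice _ Hoften) as [phi Hphi];
    specialize (Hsub phi (fun k => proj1 (Hphi k))).
  - pose proof (abel_limit_ge _ _ _ Hsub (fun k => proj2 (Hphi k))). lra.
  - pose proof (abel_limit_le _ _ _ Hsub (fun k => proj2 (Hphi k))). lra.
Qed.

(** * The kernel *)

Definition root_half (n : nat) : R := exp (- (ln 2 / INR n)).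

Lemma root_half_pow (n k : nat) : root_half n ^ k = exp (- (INR k * (ln 2 / INR n))).
Proof. unfold root_half. rewrite exp_pow. f_equal. ring. Qed.

Lemma root_half_bounds (n : nat) : (1 <= n)%nat ->
  0 < root_half n < 1 /\ / (4 * INR n) <= 1 - root_half n <= / INR n.
Proof.
  intro Hn. assert (HnR : 1 <= INR n) by (apply (le_INR 1); lia).
  pose proof ln2_bounds.
  assert (Hb : 0 < ln 2 / INR n <= 1).
  { split; [apply Rdiv_lt_0_compat; lra|].
    apply Rmult_le_reg_r with (INR n); [lra|].
    unfold Rdiv. rewrite Rmult_assoc, Rinv_l by lra. lra. }
  unfold root_half. split; [split; [apply exp_pos|]|split].
  - rewrite <- exp_0. apply exp_increasing. lra.
  - eapply Rle_trans; [|apply one_minus_exp_opp_ge; lra].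
    set (b := ln 2 / INR n) in *.
    assert (b / 2 <= b / (1 + b)).
    { unfold Rdiv. apply Rmult_le_compat_l; [lra|]. apply Rinv_le_contravar; lra. }
    assert (/ (4 * INR n) <= b / 2).
    { unfold b, Rdiv. rewrite Rinv_mult.
      assert (0 < / INR n) by (apply Rinv_0_lt_compat; lra). nra. }
    lra.
  - eapply Rle_trans; [apply one_minus_exp_opp_le|].
    unfold Rdiv. rewrite <- (Rmult_1_l (/ INR n)) at 2.
    apply Rmult_le_compat_r; [left; apply Rinv_0_lt_compat|]; lra.
Qed.

Lemma inv_one_minus_root_half_le (n : nat) : (1 <= n)%nat -> / (1 - root_half n) <= 4 * INR n.
Proof.
  intro Hn. destruct (root_half_bounds n Hn) as [_ [Hlo _]].
  assert (HnR : 1 <= INR n) by (apply (le_INR 1); lia).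
  replace (4 * INR n) with (/ / (4 * INR n)) by (field; lra).
  apply Rinv_le_contravar; [apply Rinv_0_lt_compat; lra|exact Hlo].
Qed.

Lemma root_half_pow_range (n k : nat) : (1 <= n)%nat -> 0 < root_half n ^ k <= 1.
Proof.
  intro Hn. destruct (root_half_bounds n Hn) as [[H0 H1] _].
  split; [apply pow_lt; lra|apply pow_le_1; lra].
Qed.

Definition bump (u : R) : R := 4 * u * (1 - u).

Lemma bump_eq (u : R) : bump u = 1 - (1 - 2 * u) ^ 2.
Proof. unfold bump. ring. Qed.

Lemma bump_range (u : R) : 0 <= u <= 1 -> 0 <= bump u <= 1.
Proof. intro Hu. rewrite bump_eq. pose proof (pow2_ge_0 (1 - 2 * u)). simpl. nra. Qed.

Lemma bump_le (u : R) : 0 <= u <= 1 -> bump u <= 4 * u /\ bump u <= 4 * (1 - u).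
Proof. intro Hu. unfold bump. split; nra. Qed.

(* [bump u ^ r] peaks at [u = 1/2], i.e. at [k = n] for [u = root_half n ^ k]. *)
Definition kernel (r n k : nat) : R := bump (root_half n ^ k) ^ r.

Definition kernel_coef (r i : nat) : R := 4 ^ r * Binomial.C r i * (-1) ^ i.

Lemma kernel_expand (r n k : nat) :
  kernel r n k = sum_f_R0 (fun i => kernel_coef r i * (root_half n ^ (r + i)) ^ k) r.
Proof.
  unfold kernel, bump, kernel_coef. set (u := root_half n ^ k).
  replace (4 * u * (1 - u)) with ((4 * u) * (- u + 1)) by ring.
  rewrite Rpow_mult_distr, binomial, scal_sum.
  apply sum_eq. intros i Hi.
  rewrite <- pow_mult, Nat.mul_comm, pow_mult. fold u.
  rewrite pow_add, Rpow_mult_distr.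
  replace (- u) with ((-1) * u) by ring.
  rewrite Rpow_mult_distr, pow1. ring.
Qed.

Lemma kernel_range (r n k : nat) : (1 <= n)%nat -> (1 <= r)%nat ->
  0 <= kernel r n k <= bump (root_half n ^ k).
Proof.
  intros Hn Hr. pose proof (root_half_pow_range n k Hn).
  assert (0 <= bump (root_half n ^ k) <= 1) by (apply bump_range; lra).
  unfold kernel. split; [apply pow_le; lra|apply pow_le_base; [lra|exact Hr]].
Qed.

Lemma is_series_sum_f_R0 (a : nat -> nat -> R) (L : nat -> R) (m : nat) :
  (forall i, (i <= m)%nat -> is_series (a i) (L i)) ->
  is_series (fun k => sum_f_R0 (fun i => a i k) m) (sum_f_R0 L m).
Proof.
  induction m as [|m IH]; intro H; simpl; [apply H; lia|].
  apply (is_series_plus (fun k => sum_f_R0 (fun i => a i k) m) (a (S m))).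
  - apply IH. intros; apply H; lia.
  - apply H; lia.
Qed.

Lemma is_lim_seq_sum_f_R0_0 (F : nat -> nat -> R) (m : nat) :
  (forall i, (i <= m)%nat -> is_lim_seq (F i) 0) ->
  is_lim_seq (fun n => sum_f_R0 (fun i => F i n) m) 0.
Proof.
  induction m as [|m IH]; intro H; simpl; [apply H; lia|].
  replace (Finite 0) with (Finite (0 + 0)) by (f_equal; ring).
  apply is_lim_seq_plus'; [apply IH; intros; apply H|apply H]; lia.
Qed.

(* With [y = root_half n ^ j], the expression is [(1 - root_half n) / (1 - y)] (a factor
   in [0, 1]) times the Abel mean at [y] minus [l], and [y -> 1-] as [n -> oo]. *)
Lemma abel_deviation_root_half_pow (p : nat -> R) (l : R) (j : nat) :
  abel_convergent p l -> (1 <= j)%nat ->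
  is_lim_seq (fun n => (1 - root_half n) *
    (Series (fun k => p k * (root_half n ^ j) ^ k) - l / (1 - root_half n ^ j))) 0.
Proof.
  intros [Hex Hlim] Hj. apply is_lim_seq_epsilon. intros e He.
  destruct (proj1 (filterlim_at_left_1 _ _) Hlim e He) as [d [Hd Hx]].
  destruct (eventually_INR_ge (INR j / d + 1)) as [N0 HN0].
  exists (S N0). intros n Hn. specialize (HN0 n ltac:(lia)).
  destruct (root_half_bounds n ltac:(lia)) as [[Hx0 Hx1] [_ Hhi]].
  set (x := root_half n) in *. set (y := x ^ j).
  assert (Hjn : INR j * / INR n < d).
  { assert (HnR : INR j / d < INR n) by lra.
    assert (0 <= INR j / d) by (apply Rdiv_le_0_compat; [apply pos_INR|lra]).
    apply Rmult_lt_reg_r with (INR n); [lra|].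
    rewrite Rmult_assoc, Rinv_l by lra.
    apply (Rmult_lt_compat_r d) in HnR; [|lra].
    unfold Rdiv in HnR. rewrite Rmult_assoc, Rinv_l in HnR by lra. lra. }
  assert (Hy1 : y <= x) by (apply pow_le_base; [lra|exact Hj]).
  assert (Hy0 : 0 < y) by (apply pow_lt; lra).
  assert (Hyd : 1 - d < y).
  { pose proof (bernoulli_le_1 x j ltac:(lra)).
    assert (INR j * (1 - x) <= INR j * / INR n) by (apply Rmult_le_compat_l; [apply pos_INR|lra]).
    fold y in H. lra. }
  specialize (Hx y ltac:(lra)).
  rewrite Rminus_0_r.
  replace ((1 - x) * (Series (fun k => p k * y ^ k) - l / (1 - y)))
    with ((1 - x) / (1 - y) * ((1 - y) * Series (fun k => p k * y ^ k) - l)) by (field; lra).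
  rewrite Rabs_mult, (Rabs_right ((1 - x) / (1 - y)))
    by (apply Rle_ge, Rdiv_le_0_compat; lra).
  assert ((1 - x) / (1 - y) <= 1).
  { apply Rmult_le_reg_r with (1 - y); [lra|].
    unfold Rdiv. rewrite Rmult_assoc, Rinv_l by lra. lra. }
  assert (0 <= (1 - x) / (1 - y)) by (apply Rdiv_le_0_compat; lra).
  pose proof (Rabs_pos ((1 - y) * Series (fun k => p k * y ^ k) - l)). nra.
Qed.

Lemma is_series_kernel_deviation (p : nat -> R) (l : R) (r n : nat) :
  abel_convergent p l -> (1 <= r)%nat -> (1 <= n)%nat ->
  is_series (fun k => kernel r n k * (p k - l))
    (sum_f_R0 (fun i => kernel_coef r i *
       (Series (fun k => p k * (root_half n ^ (r + i)) ^ k) - l / (1 - root_half n ^ (r + i)))) r).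
Proof.
  intros [Hex _] Hr Hn.
  destruct (root_half_bounds n Hn) as [[Hx0 Hx1] _].
  apply (is_series_ext (fun k => sum_f_R0 (fun i =>
           kernel_coef r i * ((p k - l) * (root_half n ^ (r + i)) ^ k)) r)).
  { intro k. rewrite kernel_expand, Rmult_comm, scal_sum. apply sum_eq. intros; ring. }
  apply is_series_sum_f_R0. intros i Hi.
  apply (is_series_scal_l (kernel_coef r i) (fun k => (p k - l) * (root_half n ^ (r + i)) ^ k)).
  assert (Hy : 0 <= root_half n ^ (r + i) < 1).
  { split; [apply pow_le; lra|].
    eapply Rle_lt_trans; [apply pow_le_base; [lra|lia]|lra]. }
  apply is_series_sub_geom; [exact Hy|apply Hex, Hy].
Qed.

Lemma kernel_abel_mean_lim (p : nat -> R) (l : R) (r : nat) :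
  abel_convergent p l -> (1 <= r)%nat ->
  is_lim_seq (fun n => (1 - root_half n) * Series (fun k => kernel r n k * (p k - l))) 0.
Proof.
  intros Ha Hr.
  apply (is_lim_seq_ext_loc (fun n => sum_f_R0 (fun i => kernel_coef r i *
      ((1 - root_half n) * (Series (fun k => p k * (root_half n ^ (r + i)) ^ k)
                             - l / (1 - root_half n ^ (r + i))))) r)).
  { exists 1%nat. intros n Hn.
    rewrite (is_series_unique _ _ (is_series_kernel_deviation p l r n Ha Hr Hn)).
    rewrite scal_sum. apply sum_eq. intros; ring. }
  apply is_lim_seq_sum_f_R0_0. intros i Hi.
  replace (Finite 0) with (Rbar_mult (kernel_coef r i) 0) by (simpl; f_equal; ring).
  apply is_lim_seq_scal_l, abel_deviation_root_half_pow; [exact Ha|lia].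
Qed.

Lemma exp_opp_ln2 : exp (- ln 2) = / 2.
Proof. rewrite exp_Ropp, exp_ln; lra. Qed.

Definition window_gap (del : R) : R := ln 2 * del / (2 * (1 + del)).

Lemma window_gap_range (del : R) : 0 < del -> 0 < window_gap del <= / 2.
Proof.
  intro Hd. unfold window_gap. pose proof ln2_bounds. split.
  - apply Rdiv_lt_0_compat; nra.
  - apply Rmult_le_reg_r with (2 * (1 + del)); [lra|]. unfold Rdiv.
    rewrite Rmult_assoc, Rinv_l by lra. nra.
Qed.

Section KernelBounds.
Variables (n k : nat).
Hypothesis n_ge1 : (1 <= n)%nat.

Local Notation u := (root_half n ^ k).

Let nR_ge1 : 1 <= INR n.
Proof. apply (le_INR 1); lia. Qed.

Lemma bump_le_ratio : bump u <= 4 * (INR k / INR n).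
Proof.
  pose proof (root_half_pow_range n k n_ge1). pose proof ln2_bounds.
  destruct (bump_le u ltac:(lra)) as [_ Hb].
  assert (1 - u <= INR k * (ln 2 / INR n))
    by (rewrite root_half_pow; apply one_minus_exp_opp_le).
  assert (INR k * (ln 2 / INR n) <= INR k / INR n).
  { unfold Rdiv. rewrite <- Rmult_assoc, (Rmult_comm (INR k) (ln 2)), Rmult_assoc.
    assert (0 <= INR k * / INR n)
      by (apply Rmult_le_pos; [apply pos_INR|left; apply Rinv_0_lt_compat; lra]).
    nra. }
  lra.
Qed.

Lemma root_half_pow_ge_half : (k <= n)%nat -> / 2 <= u.
Proof.
  intro Hk. rewrite root_half_pow, <- exp_opp_ln2.
  apply exp_le_compat, Ropp_le_contravar.
  unfold Rdiv. rewrite <- Rmult_assoc, (Rmult_comm (INR k)), Rmult_assoc.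
  pose proof ln2_bounds. assert (INR k <= INR n) by (apply le_INR, Hk).
  assert (INR k * / INR n <= 1).
  { apply Rmult_le_reg_r with (INR n); [lra|]. rewrite Rmult_assoc, Rinv_l by lra. lra. }
  assert (0 <= INR k * / INR n)
    by (apply Rmult_le_pos; [apply pos_INR|left; apply Rinv_0_lt_compat; lra]).
  nra.
Qed.

(* [t e^(-t) <= 1] with [t = k ln 2 / (2 n)]. *)
Lemma ratio_mul_root_half_pow_le : INR k / INR n * u <= 2 / ln 2 * root_half (2 * n) ^ k.
Proof.
  rewrite !root_half_pow, mult_INR. pose proof ln2_bounds.
  replace (INR 2) with 2 by (simpl; ring).
  set (t := INR k * (ln 2 / (2 * INR n))).
  assert (Ht : 0 <= t)
    by (unfold t; apply Rmult_le_pos; [apply pos_INR|apply Rdiv_le_0_compat; lra]).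
  replace (INR k * (ln 2 / INR n)) with (2 * t) by (unfold t; field; lra).
  replace (INR k / INR n) with (2 / ln 2 * t) by (unfold t; field; lra).
  replace (- (2 * t)) with (- t + - t) by ring. rewrite exp_plus.
  assert (t * exp (- t) <= 1).
  { rewrite exp_Ropp. apply Rmult_le_reg_r with (exp t); [apply exp_pos|].
    rewrite Rmult_assoc, Rinv_l by (apply Rgt_not_eq, exp_pos).
    pose proof (exp_ineq1_le t). lra. }
  assert (0 < exp (- t)) by apply exp_pos.
  assert (0 < 2 / ln 2) by (apply Rdiv_lt_0_compat; lra).
  replace (2 / ln 2 * t * (exp (- t) * exp (- t)))
    with (2 / ln 2 * exp (- t) * (t * exp (- t))) by ring.
  rewrite <- (Rmult_1_r (2 / ln 2 * exp (- t))) at 2.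
  apply Rmult_le_compat_l; [nra|lra].
Qed.

Lemma window_gap_le_right (del : R) : 0 < del -> (1 + del) * INR n < INR k ->
  window_gap del <= 1 - 2 * u.
Proof.
  intros Hd Hk. pose proof ln2_bounds. set (y := ln 2 * del).
  assert (Hy : 0 < y) by (unfold y; nra).
  assert (Hu : 2 * u <= exp (- y)).
  { rewrite root_half_pow.
    replace (exp (- y)) with (2 * exp (- (ln 2 * (1 + del))))
      by (rewrite <- (exp_ln 2) at 1 by lra; rewrite <- exp_plus; f_equal; unfold y; ring).
    apply Rmult_le_compat_l; [lra|]. apply exp_le_compat, Ropp_le_contravar.
    unfold Rdiv. rewrite <- Rmult_assoc, (Rmult_comm (INR k)), Rmult_assoc.
    apply Rmult_le_compat_l; [lra|].
    apply Rmult_le_reg_r with (INR n); [lra|]. rewrite Rmult_assoc, Rinv_l by lra. lra. }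
  pose proof (one_minus_exp_opp_ge y ltac:(lra)).
  assert (window_gap del <= y / (1 + y)).
  { unfold window_gap. fold y. unfold Rdiv. apply Rmult_le_compat_l; [lra|].
    apply Rinv_le_contravar; [lra|]. unfold y. nra. }
  lra.
Qed.

Lemma window_gap_le_left (del : R) : 0 < del -> (1 + del) * INR k < INR n ->
  window_gap del <= 2 * u - 1.
Proof.
  intros Hd Hk. pose proof ln2_bounds. set (y := ln 2 * del / (1 + del)).
  assert (Hy : 0 <= y) by (unfold y; apply Rdiv_le_0_compat; nra).
  assert (Hu : exp y <= 2 * u).
  { rewrite root_half_pow.
    replace (exp y) with (2 * exp (- (ln 2 / (1 + del))))
      by (rewrite <- (exp_ln 2) at 1 by lra; rewrite <- exp_plus; f_equal; unfold y; field; lra).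
    apply Rmult_le_compat_l; [lra|]. apply exp_le_compat, Ropp_le_contravar.
    unfold Rdiv. rewrite <- Rmult_assoc, (Rmult_comm (INR k)), Rmult_assoc.
    apply Rmult_le_compat_l; [lra|].
    apply Rmult_le_reg_r with (INR n); [lra|]. rewrite Rmult_assoc, Rinv_l by lra.
    apply Rmult_le_reg_l with (1 + del); [lra|].
    replace ((1 + del) * (/ (1 + del) * INR n)) with (INR n) by (field; lra). lra. }
  pose proof (exp_ineq1_le y).
  assert (window_gap del <= y).
  { unfold window_gap, y, Rdiv. rewrite Rinv_mult.
    assert (0 <= ln 2 * del * / (1 + del))
      by (apply Rmult_le_pos; [nra|left; apply Rinv_0_lt_compat; lra]).
    nra. }
  lra.
Qed.

Lemma kernel_off_window (r : nat) (del : R) : (1 <= r)%nat -> 0 < del ->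
  ((1 + del) * INR n < INR k \/ (1 + del) * INR k < INR n) ->
  kernel r n k <= (1 - window_gap del ^ 2) ^ (r - 1) * bump u.
Proof.
  intros Hr Hd Hc. pose proof (root_half_pow_range n k n_ge1).
  pose proof (bump_range u ltac:(lra)). pose proof (window_gap_range del Hd).
  assert (Hgap : window_gap del ^ 2 <= (1 - 2 * u) ^ 2).
  { destruct Hc as [Hc|Hc].
    - apply pow_incr. pose proof (window_gap_le_right del Hd Hc). lra.
    - rewrite <- (pow2_abs (1 - 2 * u)). apply pow_incr.
      pose proof (window_gap_le_left del Hd Hc). rewrite Rabs_left1; lra. }
  unfold kernel. replace r with (S (r - 1)) at 1 by lia. simpl. rewrite Rmult_comm.
  apply Rmult_le_compat_r; [lra|]. apply pow_incr. rewrite bump_eq in *. lra.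
Qed.

Lemma kernel_near_peak (R0 : nat) : (1 <= R0)%nat -> (n <= k)%nat ->
  2 * INR R0 * (INR k - INR n) <= INR n -> 3 / 4 <= kernel (R0 * R0) n k.
Proof.
  intros HR Hk Hw. pose proof ln2_bounds. pose proof (root_half_pow_range n k n_ge1).
  assert (HRR : 1 <= INR R0) by (apply (le_INR 1); lia).
  assert (HkR : INR n <= INR k) by (apply le_INR, Hk).
  assert (Hv : 0 <= 1 - 2 * u <= / (2 * INR R0)).
  { assert (H2u : 2 * u = exp (- ((INR k - INR n) * (ln 2 / INR n)))).
    { rewrite root_half_pow, <- (exp_ln 2) at 1 by lra. rewrite <- exp_plus.
      f_equal. field. lra. }
    assert (0 <= (INR k - INR n) * (ln 2 / INR n))
      by (apply Rmult_le_pos; [lra|apply Rdiv_le_0_compat; lra]).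
    rewrite H2u. split.
    - assert (exp (- ((INR k - INR n) * (ln 2 / INR n))) <= 1)
        by (rewrite <- exp_0; apply exp_le_compat; lra).
      lra.
    - eapply Rle_trans; [apply one_minus_exp_opp_le|].
      apply Rle_trans with (INR n / (2 * INR R0) * (ln 2 / INR n)).
      + apply Rmult_le_compat_r; [apply Rdiv_le_0_compat; lra|].
        apply Rmult_le_reg_r with (2 * INR R0); [lra|].
        unfold Rdiv. rewrite Rmult_assoc, Rinv_l by lra. lra.
      + replace (INR n / (2 * INR R0) * (ln 2 / INR n)) with (ln 2 * / (2 * INR R0))
          by (field; lra).
        assert (0 < / (2 * INR R0)) by (apply Rinv_0_lt_compat; lra). nra. }
  assert (Hbump : 1 - bump u <= / (4 * INR (R0 * R0))).
  { rewrite bump_eq, mult_INR.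
    assert ((1 - 2 * u) ^ 2 <= (/ (2 * INR R0)) ^ 2) by (apply pow_incr; lra).
    replace ((/ (2 * INR R0)) ^ 2) with (/ (4 * (INR R0 * INR R0))) in H1 by (field; lra).
    lra. }
  assert (HrR : 1 <= INR (R0 * R0)) by (rewrite mult_INR; nra).
  pose proof (bernoulli_le_1 (bump u) (R0 * R0) (bump_range u ltac:(lra))).
  assert (INR (R0 * R0) * (1 - bump u) <= / 4).
  { apply (Rmult_le_compat_l (INR (R0 * R0))) in Hbump; [|lra].
    replace (INR (R0 * R0) * / (4 * INR (R0 * R0))) with (/ 4) in Hbump by (field; lra).
    exact Hbump. }
  unfold kernel. lra.
Qed.

End KernelBounds.

Lemma ex_series_kernel (r n : nat) : (1 <= n)%nat -> (1 <= r)%nat -> ex_series (kernel r n).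
Proof.
  intros Hn Hr. destruct (root_half_bounds n Hn) as [[H0 H1] _].
  apply (ex_series_le (kernel r n) (fun k => 4 * root_half n ^ k)).
  - intro k. pose proof (kernel_range r n k Hn Hr).
    pose proof (root_half_pow_range n k Hn).
    destruct (bump_le (root_half n ^ k) ltac:(lra)) as [Hb _].
    change (Rabs (kernel r n k) <= 4 * root_half n ^ k). rewrite Rabs_right; lra.
  - exists (4 * / (1 - root_half n)).
    apply (is_series_scal_l 4 (fun k => root_half n ^ k)), is_series_geom_nonneg. lra.
Qed.

(* The kernel is at least [3/4] on the [n / (2 R0)] indices right after [n]. *)
Lemma kernel_mass_ge (R0 n : nat) : (1 <= R0)%nat -> (1 <= n)%nat ->
  3 * INR n / (8 * INR R0) <= Series (kernel (R0 * R0) n).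
Proof.
  intros HR Hn.
  assert (Hr : (1 <= R0 * R0)%nat) by nia.
  assert (HRR : 1 <= INR R0) by (apply (le_INR 1); lia).
  pose proof (fun k => proj1 (kernel_range (R0 * R0) n k Hn Hr)) as Hpos.
  set (h := (n / (2 * R0))%nat).
  assert (Hdm := Nat.div_mod n (2 * R0) ltac:(lia)).
  assert (Hml := Nat.mod_upper_bound n (2 * R0) ltac:(lia)). fold h in Hdm.
  assert (Hs : INR (S h) * (3 / 4) <= sum_n (kernel (R0 * R0) n) (n + h)).
  { apply sum_n_ge_window; [exact Hpos|]. intros k Hk.
    apply kernel_near_peak; [exact Hn|exact HR|lia|].
    assert (Hkn : (2 * R0 * (k - n) <= n)%nat) by nia.
    apply le_INR in Hkn. rewrite !mult_INR, minus_INR in Hkn by lia.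
    replace (INR 2) with 2 in Hkn by (simpl; lra). lra. }
  pose proof (sum_n_le_Series _ Hpos (n + h) (ex_series_kernel _ n Hn Hr)).
  assert (Hh : INR n <= 2 * INR R0 * INR (S h)).
  { assert (n <= 2 * R0 * S h)%nat by nia. apply le_INR in H0.
    rewrite !mult_INR in H0. replace (INR 2) with 2 in H0 by (simpl; lra). lra. }
  assert (3 * INR n / (8 * INR R0) <= INR (S h) * (3 / 4)).
  { apply Rmult_le_reg_r with (8 * INR R0); [lra|].
    unfold Rdiv. rewrite Rmult_assoc, Rinv_l by lra. nra. }
  lra.
Qed.

(** * Slow oscillation *)

Lemma exists_nat_half_le (t : R) : 1 <= t -> exists s : nat, t / 2 <= INR s <= t.
Proof.
  intro Ht. destruct (nfloor_ex t ltac:(lra)) as [s Hs]. exists s.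
  split; [|lra]. destruct s as [|s]; [simpl in Hs; lra|].
  rewrite S_INR in *. pose proof (pos_INR s). lra.
Qed.

Section SlowOscillationGrowth.
Variables (p : nat -> R) (eps del : R) (N : nat).
Hypothesis del_pos : 0 < del.
Hypothesis slow_osc : forall n m : nat, (N <= n)%nat -> (n <= m)%nat ->
  INR m <= (1 + del) * INR n -> Rabs (p m - p n) < eps.

Lemma slow_osc_eps_pos : 0 < eps.
Proof.
  pose proof (slow_osc N N ltac:(lia) ltac:(lia)).
  rewrite Rminus_diag, Rabs_R0 in H. apply H. pose proof (pos_INR N). nra.
Qed.

Lemma slow_osc_chain (a s : nat) : (N <= a)%nat -> INR s <= del * INR a ->
  forall j k, (a <= k <= a + j * s)%nat -> Rabs (p k - p a) <= INR j * eps.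
Proof.
  intros Ha Hs j. pose proof slow_osc_eps_pos as eps_pos. induction j as [|j IH]; intros k Hk.
  - replace k with a by lia. rewrite Rminus_diag, Rabs_R0. simpl. lra.
  - rewrite S_INR, Rmult_plus_distr_r, Rmult_1_l.
    destruct (Nat.le_gt_cases k (a + j * s)) as [H1|H1]; [specialize (IH k ltac:(lia)); lra|].
    destruct j as [|j].
    + assert (INR k <= (1 + del) * INR a).
      { assert (Hks : (k <= a + s)%nat) by lia. apply le_INR in Hks.
        rewrite plus_INR in Hks. lra. }
      specialize (slow_osc a k Ha ltac:(lia) H). simpl. lra.
    + set (k' := (k - s)%nat).
      assert (Hk' : (a <= k' <= a + S j * s)%nat) by (unfold k'; simpl in *; lia).
      assert (INR k <= (1 + del) * INR k').
      { assert (Hkk : k = (k' + s)%nat) by (unfold k'; simpl in *; lia).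
        apply (f_equal INR) in Hkk. rewrite plus_INR in Hkk.
        assert (INR a <= INR k') by (apply le_INR; lia). nra. }
      assert (Hw := slow_osc k' k ltac:(lia) ltac:(unfold k'; lia) H).
      specialize (IH k' Hk').
      pose proof (Rabs_triang (p k - p k') (p k' - p a)).
      replace (p k - p k' + (p k' - p a)) with (p k - p a) in H0 by ring.
      lra.
Qed.

(* Steps of length [s ~ del * a] each change [p] by less than [eps]. *)
Lemma slow_osc_growth (a : nat) : (N <= a)%nat -> 1 <= del * INR a ->
  forall k, (a <= k)%nat -> Rabs (p k - p a) <= eps * (1 + 2 / del * INR k / INR a).
Proof.
  intros Ha Hda k Hk. pose proof slow_osc_eps_pos as eps_pos.
  destruct (exists_nat_half_le (del * INR a) Hda) as [s [Hs1 Hs2]].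
  assert (Hs0 : (1 <= s)%nat) by (destruct s; [simpl in Hs1; lra|lia]).
  assert (HaR : 0 < INR a) by (destruct (Rle_or_lt (INR a) 0); [nra|lra]).
  set (q := ((k - a) / s)%nat).
  assert (Hdm := Nat.div_mod (k - a) s ltac:(lia)).
  assert (Hml := Nat.mod_upper_bound (k - a) s ltac:(lia)).
  fold q in Hdm.
  assert (H := slow_osc_chain a s Ha Hs2 (S q) k ltac:(nia)).
  assert (Hq : INR q * INR s <= INR k) by (rewrite <- mult_INR; apply le_INR; nia).
  assert (HsR : 0 < INR s) by (apply (lt_INR 0); lia).
  assert (Hq2 : INR q <= 2 / del * INR k / INR a).
  { apply Rmult_le_reg_r with (INR s); [lra|].
    apply Rle_trans with (INR k); [exact Hq|].
    pose proof (pos_INR k).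
    replace (2 / del * INR k / INR a * INR s) with (INR k * (INR s / (del * INR a / 2)))
      by (field; lra).
    assert (1 <= INR s / (del * INR a / 2)).
    { apply Rmult_le_reg_r with (del * INR a / 2); [nra|].
      unfold Rdiv at 2. rewrite Rmult_assoc, Rinv_l by nra. lra. }
    nra. }
  rewrite S_INR in H. nra.
Qed.

End SlowOscillationGrowth.

(** * The Tauberian theorem *)

Section TauberianEstimate.
Variables (p : nat -> R) (l eps del : R) (N A R0 : nat).
Hypothesis del_pos : 0 < del.
Hypothesis slow_osc : forall n m : nat, (N <= n)%nat -> (n <= m)%nat ->
  INR m <= (1 + del) * INR n -> Rabs (p m - p n) < eps.
Hypothesis N_le_A : (N <= A)%nat.
Hypothesis del_A_ge1 : 1 <= del * INR A.
Hypothesis R0_ge1 : (1 <= R0)%nat.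

Local Notation r := (R0 * R0)%nat.
Local Notation C := (2 / del).
Local Notation th := ((1 - window_gap del ^ 2) ^ (r - 1)).

(* Off the window [n / (1 + del) <= k <= (1 + del) n], the weighted deviation
   [kernel r n k * |p k - p n|] is at most [th * (alpha n * x ^ k + beta * y ^ k)] with
   [x = root_half n] and [y = root_half (2 n)]: [alpha] covers the left tail and the
   bounded part of the right tail, [beta] the linearly growing part of the right tail. *)
Let M := sum_n (fun i => Rabs (p i - p A)) A.
Let alpha (n : nat) := 8 * eps * (1 + C) + 8 * INR A * (M + eps) / INR n.
Let beta := 4 * C * eps * (2 / ln 2).

Let eps_pos : 0 < eps := slow_osc_eps_pos p eps del N del_pos slow_osc.

Let r_ge1 : (1 <= r)%nat.
Proof. nia. Qed.

Let th_nonneg : 0 <= th.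
Proof. pose proof (window_gap_range del del_pos). apply pow_le. nra. Qed.

Let M_nonneg : 0 <= M.
Proof. apply sum_n_nonneg. intro; apply Rabs_pos. Qed.

Let A_ge1 : 1 <= INR A.
Proof.
  destruct A as [|a]; [simpl in del_A_ge1; lra|].
  rewrite S_INR. pose proof (pos_INR a). lra.
Qed.

Let C_pos : 0 < C.
Proof. apply Rdiv_lt_0_compat; lra. Qed.

Let beta_nonneg : 0 <= beta.
Proof.
  pose proof ln2_bounds. unfold beta. apply Rmult_le_pos; [nra|apply Rdiv_le_0_compat; lra].
Qed.

Let large_n (n : nat) : (1 + del) * INR A <= INR n ->
  (1 <= n)%nat /\ (A <= n)%nat /\ 1 <= INR n /\ 1 <= del * INR n /\
  8 * eps * (1 + C) <= alpha n.
Proof.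
  intro Hn. assert (HAn : INR A <= INR n) by nra.
  assert (HnR : 1 <= INR n) by lra.
  split; [apply (INR_le 1); simpl; lra|]. split; [apply INR_le; exact HAn|].
  split; [exact HnR|]. split; [nra|].
  unfold alpha. assert (0 <= 8 * INR A * (M + eps) / INR n) by (apply Rdiv_le_0_compat; nra).
  lra.
Qed.

Lemma kernel_deviation_right (n k : nat) :
  (1 + del) * INR A <= INR n -> (1 + del) * INR n < INR k ->
  kernel r n k * Rabs (p k - p n) <=
  th * (alpha n * root_half n ^ k + beta * root_half (2 * n) ^ k).
Proof.
  intros Hn Hk. destruct (large_n n Hn) as [Hn1 [HAn [HnR [HdnR Halpha]]]].
  pose proof (root_half_pow_range n k Hn1) as Hu.
  set (u := root_half n ^ k) in *.
  assert (Hker : kernel r n k <= th * (4 * u)).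
  { eapply Rle_trans; [apply (kernel_off_window n k Hn1 r del r_ge1 del_pos (or_introl Hk))|].
    apply Rmult_le_compat_l; [exact th_nonneg|apply bump_le; lra]. }
  assert (Hkn : (n <= k)%nat) by (apply INR_le; nra).
  pose proof (slow_osc_growth p eps del N del_pos slow_osc n ltac:(lia) HdnR k Hkn) as Hdev.
  pose proof (ratio_mul_root_half_pow_le n k Hn1) as Hw. fold u in Hw.
  eapply Rle_trans.
  { apply Rmult_le_compat; [apply kernel_range; assumption|apply Rabs_pos|exact Hker|exact Hdev]. }
  replace (th * (4 * u) * (eps * (1 + C * INR k / INR n)))
    with (th * (4 * eps * u + 4 * C * eps * (INR k / INR n * u))) by (field; lra).
  apply Rmult_le_compat_l; [exact th_nonneg|]. apply Rplus_le_compat.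
  - pose proof (Rmult_lt_0_compat _ _ eps_pos C_pos). apply Rmult_le_compat_r; lra.
  - replace (beta * root_half (2 * n) ^ k)
      with (4 * C * eps * (2 / ln 2 * root_half (2 * n) ^ k)) by (unfold beta; ring).
    apply Rmult_le_compat_l; [nra|exact Hw].
Qed.

Let kernel_left_le (n k m : nat) : (1 <= n)%nat -> (1 + del) * INR k < INR n ->
  INR k <= INR m -> kernel r n k <= th * (4 * (INR m / INR n)).
Proof.
  intros Hn1 Hk Hm. assert (HnR : 1 <= INR n) by (apply (le_INR 1); lia).
  eapply Rle_trans; [apply (kernel_off_window n k Hn1 r del r_ge1 del_pos (or_intror Hk))|].
  apply Rmult_le_compat_l; [exact th_nonneg|].
  eapply Rle_trans; [apply bump_le_ratio; exact Hn1|].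
  apply Rmult_le_compat_l; [lra|]. unfold Rdiv.
  apply Rmult_le_compat_r; [left; apply Rinv_0_lt_compat; lra|exact Hm].
Qed.

Let deviation_before_A (n k : nat) : (A <= n)%nat -> (k <= A)%nat ->
  Rabs (p k - p n) <= M + eps * (1 + C * INR n / INR A).
Proof.
  intros HAn HkA.
  pose proof (sum_n_ge_term (fun i => Rabs (p i - p A)) (fun i => Rabs_pos _) A k HkA) as HkM.
  pose proof (slow_osc_growth p eps del N del_pos slow_osc A N_le_A del_A_ge1 n HAn) as HAn'.
  rewrite <- Rabs_Ropp, Ropp_minus_distr in HAn'.
  pose proof (Rabs_triang (p k - p A) (p A - p n)).
  replace (p k - p A + (p A - p n)) with (p k - p n) in H by ring.
  fold M in HkM. lra.
Qed.

Lemma kernel_deviation_left (n k : nat) :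
  (1 + del) * INR A <= INR n -> (1 + del) * INR k < INR n ->
  kernel r n k * Rabs (p k - p n) <= th * (alpha n * root_half n ^ k).
Proof.
  intros Hn Hk. destruct (large_n n Hn) as [Hn1 [HAn [HnR [HdnR Halpha]]]].
  assert (Hkn : (k <= n)%nat) by (apply INR_le; pose proof (pos_INR k); nra).
  pose proof (root_half_pow_ge_half n k Hn1 Hkn) as Hhalf.
  pose proof (Rmult_lt_0_compat _ _ eps_pos C_pos).
  assert (Halpha_u : alpha n / 2 <= alpha n * root_half n ^ k)
    by (unfold Rdiv; apply Rmult_le_compat_l; lra).
  assert (Hkern0 := proj1 (kernel_range r n k Hn1 r_ge1)).
  destruct (Nat.le_gt_cases A k) as [HAk|HkA].
  - (* [p] grows at most linearly from [p k] *)
    assert (HkR : 1 <= del * INR k) by (pose proof (le_INR _ _ HAk); nra).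
    pose proof (slow_osc_growth p eps del N del_pos slow_osc k ltac:(lia) HkR n Hkn) as Hdev.
    rewrite <- Rabs_Ropp, Ropp_minus_distr in Hdev.
    eapply Rle_trans; [apply Rmult_le_compat;
      [exact Hkern0|apply Rabs_pos|apply (kernel_left_le n k k Hn1 Hk), Rle_refl|exact Hdev]|].
    replace (th * (4 * (INR k / INR n)) * (eps * (1 + C * INR n / INR k)))
      with (th * (4 * eps * (INR k / INR n) + 4 * eps * C)) by (field; nra).
    apply Rmult_le_compat_l; [exact th_nonneg|].
    assert (INR k / INR n <= 1).
    { apply Rmult_le_reg_r with (INR n); [lra|].
      unfold Rdiv. rewrite Rmult_assoc, Rinv_l by lra. pose proof (le_INR _ _ Hkn). lra. }
    assert (4 * eps * (INR k / INR n) <= 4 * eps * 1) by (apply Rmult_le_compat_l; lra).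
    lra.
  - (* compare with [p A] *)
    eapply Rle_trans; [apply Rmult_le_compat;
      [exact Hkern0|apply Rabs_pos|apply (kernel_left_le n k A Hn1 Hk)|
       apply deviation_before_A; lia]|]; [apply le_INR; lia|].
    replace (th * (4 * (INR A / INR n)) * (M + eps * (1 + C * INR n / INR A)))
      with (th * (4 * INR A * (M + eps) / INR n + 4 * eps * C)) by (field; lra).
    apply Rmult_le_compat_l; [exact th_nonneg|].
    unfold alpha in Halpha_u |- *. lra.
Qed.

Lemma kernel_deviation_le (n k : nat) : (1 + del) * INR A <= INR n ->
  kernel r n k * Rabs (p k - p n) <=
  eps * kernel r n k + th * (alpha n * root_half n ^ k + beta * root_half (2 * n) ^ k).
Proof.
  intro Hn. destruct (large_n n Hn) as [Hn1 [HAn [HnR [_ Halpha]]]].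
  pose proof (root_half_pow_range n k Hn1).
  pose proof (root_half_pow_range (2 * n) k ltac:(lia)).
  pose proof (proj1 (kernel_range r n k Hn1 r_ge1)).
  assert (0 <= alpha n) by (pose proof (Rmult_lt_0_compat _ _ eps_pos C_pos); lra).
  assert (0 <= th * (alpha n * root_half n ^ k)) by (apply Rmult_le_pos; [exact th_nonneg|nra]).
  assert (0 <= th * (beta * root_half (2 * n) ^ k))
    by (apply Rmult_le_pos; [exact th_nonneg|nra]).
  rewrite Rmult_plus_distr_l.
  destruct (Rlt_dec ((1 + del) * INR n) (INR k)) as [Hright|Hright].
  { pose proof (kernel_deviation_right n k Hn Hright) as Hdev.
    rewrite Rmult_plus_distr_l in Hdev. nra. }
  destruct (Rlt_dec ((1 + del) * INR k) (INR n)) as [Hleft|Hleft].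
  { pose proof (kernel_deviation_left n k Hn Hleft). nra. }
  assert (Rabs (p k - p n) < eps).
  { destruct (Nat.le_gt_cases n k).
    - apply slow_osc; [lia|lia|lra].
    - rewrite <- Rabs_Ropp, Ropp_minus_distr.
      assert (HAk : (A <= k)%nat) by (apply INR_le; nra).
      apply slow_osc; [lia|lia|lra]. }
  assert (kernel r n k * Rabs (p k - p n) <= kernel r n k * eps)
    by (apply Rmult_le_compat_l; lra).
  lra.
Qed.

Lemma kernel_deviation_series_le (n : nat) : (1 + del) * INR A <= INR n ->
  Rabs (Series (fun k => kernel r n k * (p n - p k))) <=
  eps * Series (kernel r n) + th * (alpha n * (4 * INR n) + beta * (8 * INR n)).
Proof.
  intro Hn. destruct (large_n n Hn) as [Hn1 [_ [HnR [_ Halpha]]]].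
  destruct (root_half_bounds n Hn1) as [[Hx0 Hx1] _].
  destruct (root_half_bounds (2 * n) ltac:(lia)) as [[Hy0 Hy1] _].
  assert (Hb : is_series
    (fun k => eps * kernel r n k + th * (alpha n * root_half n ^ k + beta * root_half (2 * n) ^ k))
    (eps * Series (kernel r n) +
     th * (alpha n * / (1 - root_half n) + beta * / (1 - root_half (2 * n))))).
  { apply (is_series_plus (fun k => eps * kernel r n k)
      (fun k => th * (alpha n * root_half n ^ k + beta * root_half (2 * n) ^ k))).
    - apply (is_series_scal_l eps (kernel r n)), Series_correct, ex_series_kernel; assumption.
    - apply (is_series_scal_l th
        (fun k => alpha n * root_half n ^ k + beta * root_half (2 * n) ^ k)).
      apply (is_series_plus (fun k => alpha n * root_half n ^ k)
        (fun k => beta * root_half (2 * n) ^ k)).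
      + apply (is_series_scal_l (alpha n) (fun k => root_half n ^ k)).
        apply is_series_geom_nonneg. lra.
      + apply (is_series_scal_l beta (fun k => root_half (2 * n) ^ k)).
        apply is_series_geom_nonneg. lra. }
  assert (Hmaj : forall k, Rabs (kernel r n k * (p n - p k)) <=
    eps * kernel r n k + th * (alpha n * root_half n ^ k + beta * root_half (2 * n) ^ k)).
  { intro k. pose proof (proj1 (kernel_range r n k Hn1 r_ge1)).
    rewrite Rabs_mult, (Rabs_right (kernel r n k)), <- Rabs_Ropp, Ropp_minus_distr by lra.
    apply kernel_deviation_le, Hn. }
  eapply Rle_trans; [exact (Rabs_Series_le _ _ _ Hmaj Hb)|].
  pose proof (inv_one_minus_root_half_le n Hn1).
  pose proof (inv_one_minus_root_half_le (2 * n) ltac:(lia)).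
  rewrite mult_INR in H0. replace (INR 2) with 2 in H0 by (simpl; ring).
  assert (0 <= alpha n) by (pose proof (Rmult_lt_0_compat _ _ eps_pos C_pos); lra).
  apply Rplus_le_compat_l, Rmult_le_compat_l; [exact th_nonneg|].
  apply Rplus_le_compat; apply Rmult_le_compat_l; lra.
Qed.

Hypothesis abel_conv : abel_convergent p l.

Lemma deviation_mul_mass_le (n : nat) : (1 + del) * INR A <= INR n ->
  Rabs (p n - l) * Series (kernel r n) <=
  Rabs (Series (fun k => kernel r n k * (p k - l))) + eps * Series (kernel r n)
  + th * (alpha n * (4 * INR n) + beta * (8 * INR n)).
Proof.
  intro Hn. destruct (large_n n Hn) as [Hn1 _].
  pose proof (ex_series_kernel r n Hn1 r_ge1) as HZ.
  assert (HS : ex_series (fun k => kernel r n k * (p k - l)))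
    by (eexists; apply is_series_kernel_deviation; assumption).
  assert (HZ0 : 0 <= Series (kernel r n))
    by (apply Series_nonneg; [intro k; apply (kernel_range r n k Hn1 r_ge1)|exact HZ]).
  assert (Hsplit : (p n - l) * Series (kernel r n) = Series (fun k => kernel r n k * (p k - l))
                   + Series (fun k => kernel r n k * (p n - p k))).
  { rewrite <- Series_scal_l.
    assert (HD : Series (fun k => kernel r n k * (p n - p k)) =
      Series (fun k => (p n - l) * kernel r n k) - Series (fun k => kernel r n k * (p k - l))).
    { rewrite <- Series_minus; [apply Series_ext; intro k; ring| |exact HS].
      apply (ex_series_scal_l (p n - l) (kernel r n)), HZ. }
    rewrite HD. ring. }
  rewrite <- (Rabs_right (Series (kernel r n))) at 1 by lra.
  rewrite <- Rabs_mult, Hsplit.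
  pose proof (kernel_deviation_series_le n Hn).
  pose proof (Rabs_triang (Series (fun k => kernel r n k * (p k - l)))
                (Series (fun k => kernel r n k * (p n - p k)))).
  lra.
Qed.

Lemma kernel_abel_part_eventually_le : exists N1, forall n, (N1 <= n)%nat -> (1 <= n)%nat ->
  Rabs (Series (fun k => kernel r n k * (p k - l))) <= eps * (3 * INR n / (8 * INR R0)).
Proof.
  assert (HR : 1 <= INR R0) by (apply (le_INR 1); lia).
  assert (He : 0 < eps * 3 / (32 * INR R0)) by (apply Rdiv_lt_0_compat; lra).
  destruct (proj1 (is_lim_seq_epsilon _ _) (kernel_abel_mean_lim p l r abel_conv r_ge1) _ He)
    as [N1 HN1].
  exists N1. intros n Hn Hn1. specialize (HN1 n Hn).
  destruct (root_half_bounds n Hn1) as [[Hx0 Hx1] _].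
  pose proof (inv_one_minus_root_half_le n Hn1).
  assert (HnR : 1 <= INR n) by (apply (le_INR 1); lia).
  set (S := Series (fun k => kernel r n k * (p k - l))) in *.
  rewrite Rminus_0_r, Rabs_mult, (Rabs_right (1 - root_half n)) in HN1 by lra.
  replace (Rabs S) with (/ (1 - root_half n) * ((1 - root_half n) * Rabs S)) by (field; lra).
  replace (eps * (3 * INR n / (8 * INR R0))) with (4 * INR n * (eps * 3 / (32 * INR R0)))
    by (field; lra).
  apply Rmult_le_compat; [left; apply Rinv_0_lt_compat; lra| |assumption|lra].
  pose proof (Rabs_pos S). nra.
Qed.

Lemma kernel_tail_part_le (n : nat) : th * (36 + 160 * C) <= 3 / (8 * INR R0) ->
  (1 + del) * INR A <= INR n -> 8 * INR A * (M + eps) / eps <= INR n ->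
  th * (alpha n * (4 * INR n) + beta * (8 * INR n)) <= eps * (3 * INR n / (8 * INR R0)).
Proof.
  intros Hth Hn Hn'. destruct (large_n n Hn) as [_ [_ [HnR _]]].
  pose proof ln2_bounds. assert (HR : 1 <= INR R0) by (apply (le_INR 1); lia).
  assert (Halpha : alpha n <= eps * (9 + 8 * C)).
  { assert (8 * INR A * (M + eps) / INR n <= eps).
    { apply Rmult_le_reg_r with (INR n); [lra|].
      unfold Rdiv at 1. rewrite Rmult_assoc, Rinv_l by lra.
      apply (Rmult_le_compat_r eps) in Hn'; [|lra].
      unfold Rdiv in Hn'. rewrite Rmult_assoc, Rinv_l in Hn' by lra. lra. }
    unfold alpha. lra. }
  assert (Hbeta : beta <= 16 * C * eps).
  { assert (2 / ln 2 <= 4).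
    { apply Rmult_le_reg_r with (ln 2); [lra|].
      unfold Rdiv. rewrite Rmult_assoc, Rinv_l by lra. lra. }
    unfold beta. pose proof (Rmult_lt_0_compat _ _ eps_pos C_pos). nra. }
  assert (alpha n * (4 * INR n) + beta * (8 * INR n) <= (36 + 160 * C) * eps * INR n).
  { assert (alpha n * (4 * INR n) <= eps * (9 + 8 * C) * (4 * INR n))
      by (apply Rmult_le_compat_r; lra).
    assert (beta * (8 * INR n) <= 16 * C * eps * (8 * INR n))
      by (apply Rmult_le_compat_r; lra).
    lra. }
  apply Rle_trans with (th * ((36 + 160 * C) * eps * INR n));
    [apply Rmult_le_compat_l; [exact th_nonneg|assumption]|].
  replace (th * ((36 + 160 * C) * eps * INR n)) with (th * (36 + 160 * C) * (eps * INR n))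
    by ring.
  replace (eps * (3 * INR n / (8 * INR R0))) with (3 / (8 * INR R0) * (eps * INR n))
    by (field; lra).
  apply Rmult_le_compat_r; [nra|exact Hth].
Qed.

Lemma tauberian_estimate : th * (36 + 160 * C) <= 3 / (8 * INR R0) ->
  exists n0, forall n, (n0 <= n)%nat -> Rabs (p n - l) <= 3 * eps.
Proof.
  intro Hth. assert (HR : 1 <= INR R0) by (apply (le_INR 1); lia).
  destruct kernel_abel_part_eventually_le as [N1 HN1].
  destruct (eventually_INR_ge ((1 + del) * INR A)) as [N2 HN2].
  destruct (eventually_INR_ge (8 * INR A * (M + eps) / eps)) as [N3 HN3].
  exists (N1 + N2 + N3)%nat. intros n Hn.
  specialize (HN2 n ltac:(lia)). specialize (HN3 n ltac:(lia)).
  destruct (large_n n HN2) as [Hn1 [_ [HnR _]]].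
  specialize (HN1 n ltac:(lia) Hn1).
  pose proof (deviation_mul_mass_le n HN2) as Hdev.
  pose proof (kernel_mass_ge R0 n R0_ge1 Hn1) as Hmass.
  pose proof (kernel_tail_part_le n Hth HN2 HN3) as Htail.
  set (Z := Series (kernel r n)) in *.
  assert (HZ : 0 < Z) by (eapply Rlt_le_trans; [|exact Hmass]; apply Rdiv_lt_0_compat; lra).
  assert (eps * (3 * INR n / (8 * INR R0)) <= eps * Z) by (apply Rmult_le_compat_l; lra).
  apply Rmult_le_reg_r with Z; [exact HZ|]. lra.
Qed.

End TauberianEstimate.

Lemma pow_mul_lin_le_1 (a : R) (m : nat) : 0 <= a <= 1 -> (1 - a) ^ m * (1 + a * INR m) <= 1.
Proof.
  intro Ha. pose proof (Rle_pow_lin a m (proj1 Ha)).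
  assert ((1 - a) ^ m * (1 + a) ^ m <= 1) by (rewrite <- Rpow_mult_distr; apply pow_le_1; nra).
  assert (0 <= (1 - a) ^ m) by (apply pow_le; lra).
  assert ((1 - a) ^ m * (1 + a * INR m) <= (1 - a) ^ m * (1 + a) ^ m)
    by (apply Rmult_le_compat_l; lra).
  lra.
Qed.

(* Decay like [(1 - a) ^ (R0 ^ 2)] beats the loss of the factor [R0]. *)
Lemma exists_sq_exponent_small (a X : R) : 0 < a <= 1 -> 0 <= X ->
  exists R0 : nat, (1 <= R0)%nat /\ (1 - a) ^ (R0 * R0 - 1) * X <= 3 / (8 * INR R0).
Proof.
  intros Ha HX. set (K := 8 * X / (3 * a)).
  destruct (eventually_INR_ge (K + 1)) as [m Hm].
  exists (S m). split; [lia|]. specialize (Hm (S m) ltac:(lia)).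
  set (R1 := INR (S m)) in *.
  assert (HR1 : 1 <= R1) by (unfold R1; rewrite S_INR; pose proof (pos_INR m); lra).
  assert (HK : 0 <= K) by (unfold K; apply Rdiv_le_0_compat; lra).
  pose proof (pow_mul_lin_le_1 a (S m * S m - 1) ltac:(lra)) as Hdecay.
  rewrite minus_INR, mult_INR in Hdecay by nia. fold R1 in Hdecay. simpl (INR 1) in Hdecay.
  set (th := (1 - a) ^ (S m * S m - 1)) in *.
  assert (Hth : 0 <= th) by (apply pow_le; lra).
  assert (H8 : 8 * R1 * X / 3 <= 1 + a * (R1 * R1 - 1)).
  { replace (8 * R1 * X / 3) with (K * a * R1) by (unfold K; field; lra).
    assert (K * R1 <= (R1 - 1) * R1) by nra. nra. }
  apply Rmult_le_reg_r with (8 * R1 / 3); [lra|].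
  replace (3 / (8 * R1) * (8 * R1 / 3)) with 1 by (field; lra).
  replace (th * X * (8 * R1 / 3)) with (th * (8 * R1 * X / 3)) by (field; lra).
  apply Rle_trans with (th * (1 + a * (R1 * R1 - 1))); [|exact Hdecay].
  apply Rmult_le_compat_l; lra.
Qed.

Theorem tauberian (p : nat -> R) (l : R) :
  slowly_oscillating p -> abel_convergent p l -> is_lim_seq p l.
Proof.
  intros Hso Ha. apply is_lim_seq_epsilon. intros e He.
  destruct (Hso (e / 4) ltac:(lra)) as [del [Hdel [N [_ Hosc]]]].
  destruct (eventually_INR_ge (/ del)) as [A0 HA0].
  assert (HA : 1 <= del * INR (N + A0)).
  { specialize (HA0 (N + A0)%nat ltac:(lia)).
    apply (Rmult_le_compat_l del) in HA0; [|lra]. rewrite Rinv_r in HA0 by lra. exact HA0. }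
  pose proof (window_gap_range del Hdel) as Hgap.
  destruct (exists_sq_exponent_small (window_gap del ^ 2) (36 + 160 * (2 / del)))
    as [R0 [HR0 Hth]]; [simpl; nra|assert (0 < 2 / del) by (apply Rdiv_lt_0_compat; lra); lra|].
  destruct (tauberian_estimate p l (e / 4) del N (N + A0) R0 Hdel Hosc ltac:(lia) HA HR0 Ha Hth)
    as [n0 Hn0].
  exists n0. intros n Hn. specialize (Hn0 n Hn). lra.
Qed.

Theorem corollary4 (f : R -> R) (p : nat -> R) :
  abel_continuous f ->
  slowly_oscillating p ->
  (exists l : R, abel_convergent p l) ->
  ex_finite_lim_seq (fun n => f (p n)).
Proof.
  intros Hf Hso [l Hl]. exists (f l).
  apply abel_continuous_is_lim_seq; [exact Hf|]. exact (tauberian p l Hso Hl).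
Qed.
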